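(* Let $m\ge n$, $B\in\mathbb R^{n\times m}$ of full row rank, $f,h$ convex and continuously differentiable with Lipschitz gradients, $\mathcal L(u,p)=f(u)-h(p)+(Bu,p)$ with saddle point $(u^*,p^* )$, and $\mathcal I_{\mathcal V},\mathcal I_{\mathcal Q}$ symmetric positive definite. Suppose $f\in\mathcal S^{1,1}_{\mu_{f,\mathcal I_{\mathcal V}},L_{f,\mathcal I_{\mathcal V}}}$ w.r.t. $\mathcal I_{\mathcal V}$ with $0<\mu_{f,\mathcal I_{\mathcal V}}\le L_{f,\mathcal I_{\mathcal V}}<2$. Let $(u_k,p_k)$ be generated from $(u_0,p_0)$ by the inexact IMEX iteration $$u_{k+1/2}=u_k-\mathcal I_{\mathcal V}^{-1}(\nabla f(u_k)+B^\top p_k),\qquad p_{k+1}=p_k-\alpha_k\mathcal I_{\mathcal Q}^{-1}(\nabla h(p_k)-Bu_{k+1/2}),$$ where $u_{k+1}$ is any point satisfying $\|\nabla\tilde f(u_{k+1};u_k,p_{k+1})\|^2_{\mathcal I_{\mathcal V}^{-1}}\le\epsilon_k$ for $k=0,1,2,\dots$, with $\tilde f(u;u_k,p_{k+1})=f(u)+\frac1{2\alpha_k}\|u-u_k+\alpha_k\mathcal I_{\mathcal V}^{-1}B^\top p_{k+1}\|^2_{\mathcal I_{\mathcal V}}$ (gradient in $u$). Then for $0<\alpha_k<\mu_{\mathcal Q}/L_{S,\mathcal Q}^2$ and $\mu_k=\min\{\mu_{\mathcal V}/2,\ \mu_{\mathcal Q}-\alpha_kL_{S,\mathcal Q}^2\}$,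 $$\mathcal E(u_{k+1},p_{k+1})\le\frac1{1+\alpha_k\mu_k}\mathcal E(u_k,p_k)+\frac{2\alpha_k}{(1+\alpha_k\mu_k)\mu_{\mathcal V}}\epsilon_k.$$ In particular, for $\alpha_k=\mu_{\mathcal Q}/(2L_{S,\mathcal Q}^2)$ for all $k$, $$\mathcal E(u_{n+1},p_{n+1})\le\rho^{n+1}\mathcal E(u_0,p_0)+\frac{\mu_{\mathcal Q}}{\mu_{\mathcal V}L_{S,\mathcal Q}^2}\sum_{k=0}^n\rho^{n-k+1}\epsilon_k,$$ where $\mu=\min\{\mu_{\mathcal V},\mu_{\mathcal Q}\}$ and $\rho=1/(1+\mu_{\mathcal Q}\mu/(4L_{S,\mathcal Q}^2))\in(0,1)$.
   Context: For SPD $M$, $\|x\|_M=(Mx,x)^{1/2}$; $D_g(y,x)=g(y)-g(x)-(\nabla g(x),y-x)$; $g\in\mathcal S^{1,1}_{\mu_{g,M},L_{g,M}}$ w.r.t. $M$ means $\frac{\mu_{g,M}}2\|x-y\|_M^2\le D_g(y,x)\le\frac{L_{g,M}}2\|x-y\|_M^2$ for all $x,y$. A saddle point satisfies $\nabla f(u^* )+B^\top p^*=0$, $Bu^*=\nabla h(p^* )$. Define $e(u)=u-\mathcal I_{\mathcal V}^{-1}\nabla f(u)$, $h_B(p)=h(p)+\frac12(B\mathcal I_{\mathcal V}^{-1}B^\top p,p)$, $\mathcal E(u,p)=\frac12\|u-u^*\|^2_{\mathcal I_{\mathcal V}}+\frac12\|p-p^*\|^2_{\mathcal I_{\mathcal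 Q}}$. Let $L_{e,\mathcal I_{\mathcal V}}$ be the Lipschitz constant of $e$ in $\|\cdot\|_{\mathcal I_{\mathcal V}}$, $\mu_{h_B,\mathcal I_{\mathcal Q}},L_{h_B,\mathcal I_{\mathcal Q}}$ the convexity and smoothness constants of $h_B$ w.r.t. $\mathcal I_{\mathcal Q}$, $L_S^2=\lambda_{\max}(\mathcal I_{\mathcal Q}^{-1}B\mathcal I_{\mathcal V}^{-1}B^\top)$. Constants: $\mu_{\mathcal V}=\mu_{f,\mathcal I_{\mathcal V}}$, $\mu_{\mathcal Q}=(2-L_{f,\mathcal I_{\mathcal V}})\mu_{h_B,\mathcal I_{\mathcal Q}}$, $L_{S,\mathcal Q}^2=L_{h_B,\mathcal I_{\mathcal Q}}^2+L_{e,\mathcal I_{\mathcal V}}^2L_S^2$. *)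

From HB Require Import structures.
From mathcomp Require Import all_boot all_order all_algebra.
From mathcomp Require Import all_classical all_reals all_analysis.
Set Implicit Arguments. Unset Strict Implicit. Unset Printing Implicit Defensive.
Import Order.TTheory GRing.Theory Num.Theory.
Import numFieldNormedType.Exports.
Local Open Scope ring_scope.

Section Defs.
Variable R : realType.

Definition dotv {k : nat} (x y : 'cV[R]_k) : R := (x^T *m y) 0 0.

Definition mnorm2 {k : nat} (M : 'M[R]_k) (x : 'cV[R]_k) : R := dotv (M *m x) x.

Definition spd {k : nat} (M : 'M[R]_k) : Prop :=
  M^T = M /\ forall x : 'cV[R]_k, x != 0 -> 0 < mnorm2 M x.

Definition is_gradient {k : nat} (f : 'cV[R]_k -> R) (df : 'cV[R]_k -> 'cV[R]_k) : Prop :=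
  forall x v : 'cV[R]_k, is_derive x v f (dotv (df x) v).

Definition convex_fun {k : nat} (f : 'cV[R]_k -> R) : Prop :=
  forall (x y : 'cV[R]_k) (t : R), 0 <= t <= 1 ->
    f (t *: x + (1 - t) *: y) <= t * f x + (1 - t) * f y.

Definition lipschitz_map {k : nat} (g : 'cV[R]_k -> 'cV[R]_k) : Prop :=
  exists L : R, 0 <= L /\ forall x y : 'cV[R]_k,
    dotv (g x - g y) (g x - g y) <= L ^+ 2 * dotv (x - y) (x - y).

Definition bregman {k : nat} (g : 'cV[R]_k -> R) (dg : 'cV[R]_k -> 'cV[R]_k)
  (y x : 'cV[R]_k) : R := g y - g x - dotv (dg x) (y - x).

Definition in_S11 {k : nat} (g : 'cV[R]_k -> R) (dg : 'cV[R]_k -> 'cV[R]_k)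
  (M : 'M[R]_k) (mu L : R) : Prop :=
  forall x y : 'cV[R]_k,
    mu / 2 * mnorm2 M (x - y) <= bregman g dg y x <= L / 2 * mnorm2 M (x - y).

Definition lagr {m n : nat} (f : 'cV[R]_m -> R) (h : 'cV[R]_n -> R)
  (B : 'M[R]_(n, m)) (u : 'cV[R]_m) (p : 'cV[R]_n) : R :=
  f u - h p + dotv (B *m u) p.

Definition saddle_point {m n : nat} (f : 'cV[R]_m -> R) (h : 'cV[R]_n -> R)
  (B : 'M[R]_(n, m)) (us : 'cV[R]_m) (ps : 'cV[R]_n) : Prop :=
  forall (u : 'cV[R]_m) (p : 'cV[R]_n),
    lagr f h B us p <= lagr f h B us ps /\ lagr f h B us ps <= lagr f h B u ps.

Definition emap {m : nat} (IV : 'M[R]_m) (df : 'cV[R]_m -> 'cV[R]_m) (u : 'cV[R]_m)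
  : 'cV[R]_m := u - invmx IV *m df u.

Definition hB {m n : nat} (h : 'cV[R]_n -> R) (B : 'M[R]_(n, m)) (IV : 'M[R]_m)
  (p : 'cV[R]_n) : R := h p + 2^-1 * dotv (B *m invmx IV *m B^T *m p) p.
Definition dhB {m n : nat} (dh : 'cV[R]_n -> 'cV[R]_n) (B : 'M[R]_(n, m)) (IV : 'M[R]_m)
  (p : 'cV[R]_n) : 'cV[R]_n := dh p + B *m invmx IV *m B^T *m p.

Definition energy {m n : nat} (IV : 'M[R]_m) (IQ : 'M[R]_n)
  (us : 'cV[R]_m) (ps : 'cV[R]_n) (u : 'cV[R]_m) (p : 'cV[R]_n) : R :=
  2^-1 * mnorm2 IV (u - us) + 2^-1 * mnorm2 IQ (p - ps).

Definition u_half {m n : nat} (IV : 'M[R]_m) (B : 'M[R]_(n, m))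
  (df : 'cV[R]_m -> 'cV[R]_m) (uk : 'cV[R]_m) (pk : 'cV[R]_n) : 'cV[R]_m :=
  uk - invmx IV *m (df uk + B^T *m pk).

Definition p_next {m n : nat} (IV : 'M[R]_m) (IQ : 'M[R]_n) (B : 'M[R]_(n, m))
  (df : 'cV[R]_m -> 'cV[R]_m) (dh : 'cV[R]_n -> 'cV[R]_n) (alpha : R)
  (uk : 'cV[R]_m) (pk : 'cV[R]_n) : 'cV[R]_n :=
  pk - alpha *: (invmx IQ *m (dh pk - B *m u_half IV B df uk pk)).

(* ftilde(u; u_k, p_{k+1}) = f(u) + 1/(2 alpha) ||u - u_k + alpha I_V^{-1} B^T p_{k+1}||^2_{I_V}
   and its gradient in u (I_V symmetric) *)
Definition ftilde {m n : nat} (IV : 'M[R]_m) (B : 'M[R]_(n, m)) (f : 'cV[R]_m -> R)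
  (alpha : R) (uk : 'cV[R]_m) (pk1 : 'cV[R]_n) (u : 'cV[R]_m) : R :=
  f u + (2 * alpha)^-1 * mnorm2 IV (u - uk + alpha *: (invmx IV *m (B^T *m pk1))).
Definition grad_ftilde {m n : nat} (IV : 'M[R]_m) (B : 'M[R]_(n, m))
  (df : 'cV[R]_m -> 'cV[R]_m) (alpha : R) (uk : 'cV[R]_m) (pk1 : 'cV[R]_n)
  (u : 'cV[R]_m) : 'cV[R]_m :=
  df u + alpha^-1 *: (IV *m (u - uk + alpha *: (invmx IV *m (B^T *m pk1)))).

End Defs.

From HB Require Import structures.
From mathcomp Require Import all_boot all_order all_algebra.
From mathcomp Require Import all_classical all_reals all_analysis.
From mathcomp Require Import ring lra.
Import Order.TTheory GRing.Theory Num.Theory.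
Import numFieldNormedType.Exports.
Set Implicit Arguments. Unset Strict Implicit. Unset Printing Implicit Defensive.
Local Open Scope classical_set_scope.
Local Open Scope ring_scope.

(* With the errors [u_{k+1} - us] and [p_{k+1} - ps], the two half-steps
   read as error equations
     I_V (u_{k+1} - u_k) = a (grad ftilde - (df u_{k+1} - df us) - B^T (p_{k+1} - ps)),
     I_Q (p_{k+1} - p_k) = a (mismatch - (dh_B p_{k+1} - dh_B ps) + B (e u_{k+1} - e us)),
   where [mismatch] collects the explicit-versus-implicit differences and is
   bounded by [L_{S,Q}^2] times the squared step length.  The three-point
   identity turns the decrease of the Lyapunov function into inner products of
   these right-hand sides with the errors, which are controlled by strong
   monotonicity and co-coercivity of [df] and [dh_B], by
   [||B w||_{I_Q^-1} <= L_S ||w||_{I_V}] (a Rayleigh-quotient argument) and by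
   Young's inequality.  This yields
   [(1 + a mu_k) E(u_{k+1}, p_{k+1}) <= E(u_k, p_k) + (2 a / mu_V) eps_k];
   for the constant step the recursion is unrolled. *)

Section InnerProduct.
Variables (R : realType) (k : nat).
Implicit Types (x y z : 'cV[R]_k) (M : 'M[R]_k).

Lemma dotvE x y : dotv x y = \sum_i x i 0 * y i 0.
Proof. by rewrite /dotv !mxE; apply: eq_bigr => i _; rewrite !mxE. Qed.

Lemma dotvC x y : dotv x y = dotv y x.
Proof. by rewrite !dotvE; apply: eq_bigr => i _; rewrite mulrC. Qed.

Lemma dotvDl x y z : dotv (x + y) z = dotv x z + dotv y z.
Proof. by rewrite !dotvE -big_split; apply: eq_bigr => i _; rewrite !mxE mulrDl. Qed.

Lemma dotvDr x y z : dotv z (x + y) = dotv z x + dotv z y.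
Proof. by rewrite ![dotv z _]dotvC dotvDl. Qed.

Lemma dotvZl a x y : dotv (a *: x) y = a * dotv x y.
Proof. by rewrite !dotvE mulr_sumr; apply: eq_bigr => i _; rewrite !mxE mulrA. Qed.

Lemma dotvZr a x y : dotv y (a *: x) = a * dotv y x.
Proof. by rewrite ![dotv y _]dotvC dotvZl. Qed.

Lemma dotvNl x y : dotv (- x) y = - dotv x y.
Proof. by rewrite -scaleN1r dotvZl mulN1r. Qed.

Lemma dotvNr x y : dotv y (- x) = - dotv y x.
Proof. by rewrite ![dotv y _]dotvC dotvNl. Qed.

Lemma dotvBl x y z : dotv (x - y) z = dotv x z - dotv y z.
Proof. by rewrite dotvDl dotvNl. Qed.

Lemma dotvBr x y z : dotv z (x - y) = dotv z x - dotv z y.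
Proof. by rewrite dotvDr dotvNr. Qed.

Lemma dotv0r x : dotv x 0 = 0.
Proof. by rewrite -(scale0r 0) dotvZr mul0r. Qed.

Lemma dotv0l x : dotv 0 x = 0.
Proof. by rewrite dotvC dotv0r. Qed.

Lemma dotvv_ge0 x : 0 <= dotv x x.
Proof. by rewrite dotvE; apply: sumr_ge0 => i _; rewrite -expr2 sqr_ge0. Qed.

Lemma dotvv_eq0 x : dotv x x = 0 -> x = 0.
Proof.
rewrite dotvE => /eqP; rewrite psumr_eq0 => [/allP x0|i _]; last first.
  by rewrite -expr2 sqr_ge0.
apply/matrixP => i j; rewrite (ord1 j) mxE; apply/eqP.
by rewrite -sqrf_eq0 expr2; apply: (implyP (x0 i _)); rewrite ?mem_index_enum.
Qed.

Lemma dotv_ge0_eq0 x : (forall y, 0 <= dotv x y) -> x = 0.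
Proof.
move=> x_ge0; apply: dotvv_eq0; have := x_ge0 (- x); rewrite dotvNr.
by have := dotvv_ge0 x; lra.
Qed.

End InnerProduct.

Lemma dotv_mulmx (R : realType) p q (A : 'M[R]_(p, q)) x y :
  dotv (A *m x) y = dotv x (A^T *m y).
Proof. by rewrite /dotv trmx_mul mulmxA. Qed.

Lemma dotv_sym (R : realType) k (M : 'M[R]_k) x y :
  M^T = M -> dotv (M *m x) y = dotv (M *m y) x.
Proof. by move=> sM; rewrite dotv_mulmx sM dotvC. Qed.

Section WeightedNorm.
Variables (R : realType) (k : nat) (M : 'M[R]_k).
Implicit Types (x y : 'cV[R]_k).

Lemma mnorm2_0 : mnorm2 M 0 = 0.
Proof. by rewrite /mnorm2 dotv0r. Qed.

Lemma mnorm2N x : mnorm2 M (- x) = mnorm2 M x.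
Proof. by rewrite /mnorm2 mulmxN dotvNl dotvNr opprK. Qed.

Lemma mnorm2Z a x : mnorm2 M (a *: x) = a ^+ 2 * mnorm2 M x.
Proof. by rewrite /mnorm2 -scalemxAr dotvZl dotvZr mulrA expr2. Qed.

Lemma mnorm2_subM (N : 'M[R]_k) a x :
  mnorm2 (M - a *: N) x = mnorm2 M x - a * mnorm2 N x.
Proof. by rewrite /mnorm2 mulmxBl -scalemxAl dotvBl dotvZl. Qed.

Hypothesis sM : M^T = M.

Lemma mnorm2D x y :
  mnorm2 M (x + y) = mnorm2 M x + 2 * dotv (M *m x) y + mnorm2 M y.
Proof.
by rewrite /mnorm2 mulmxDr !dotvDl !dotvDr [dotv (M *m y) x]dotv_sym //; ring.
Qed.

Lemma mnorm2B x y :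
  mnorm2 M (x - y) = mnorm2 M x - 2 * dotv (M *m x) y + mnorm2 M y.
Proof. by rewrite mnorm2D mnorm2N dotvNr; ring. Qed.

Lemma mnorm2_three_point x1 x0 xs :
  mnorm2 M (x0 - xs) =
  mnorm2 M (x1 - xs) - 2 * dotv (M *m (x1 - x0)) (x1 - xs) + mnorm2 M (x1 - x0).
Proof.
have -> : x0 - xs = (x1 - xs) - (x1 - x0) by rewrite opprB [RHS]addrC addrA subrK.
by rewrite mnorm2B dotv_sym.
Qed.

End WeightedNorm.

Section PositiveDefinite.
Variables (R : realType) (k : nat) (M : 'M[R]_k).
Hypothesis M_spd : spd M.
Implicit Types (x y : 'cV[R]_k).

Lemma spd_sym : M^T = M.
Proof. by case: M_spd. Qed.

Lemma spd_gt0 x : x != 0 -> 0 < mnorm2 M x.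
Proof. by case: M_spd => _; apply. Qed.

Lemma spd_ge0 x : 0 <= mnorm2 M x.
Proof. by have [->|/spd_gt0/ltW//] := eqVneq x 0; rewrite mnorm2_0. Qed.

Lemma spd_le0 x : mnorm2 M x <= 0 -> x = 0.
Proof. by have [//|/spd_gt0] := eqVneq x 0; rewrite ltNge => /negP. Qed.

Lemma spd_unitmx : M \in unitmx.
Proof.
rewrite -row_free_unit -kermx_eq0; apply: contraT => ker_neq0.
have /eigenvalueP [v vM v_neq0] : eigenvalue M 0.
  by rewrite /eigenvalue /eigenspace raddf0 subr0.
have : v^T != 0 by rewrite -(inj_eq (@trmx_inj _ _ _)) trmxK trmx0.
move/spd_gt0; rewrite /mnorm2 -{1}spd_sym -trmx_mul vM scale0r trmx0 dotv0l.
by rewrite ltxx.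
Qed.

Lemma mnorm2_invmx g : mnorm2 M (invmx M *m g) = mnorm2 (invmx M) g.
Proof. by rewrite /mnorm2 mulKVmx ?spd_unitmx // dotvC. Qed.

Lemma spd_invmx : spd (invmx M).
Proof.
split; first by rewrite trmx_inv spd_sym.
move=> g g_neq0; rewrite -mnorm2_invmx; apply: spd_gt0.
apply: contra g_neq0 => /eqP g0.
by rewrite -(mulKVmx spd_unitmx g) g0 mulmx0.
Qed.

Lemma young x y c : 0 < c ->
  2 * dotv (M *m x) y <= c * mnorm2 M x + c^-1 * mnorm2 M y.
Proof.
move=> c_gt0; rewrite -subr_ge0.
have -> : c * mnorm2 M x + c^-1 * mnorm2 M y - 2 * dotv (M *m x) y =
          c^-1 * mnorm2 M (c *: x - y).
  rewrite mnorm2B ?spd_sym // mnorm2Z -scalemxAr dotvZl.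
  by field; rewrite gt_eqF.
by apply: mulr_ge0; [rewrite invr_ge0 ltW | exact: spd_ge0].
Qed.

Lemma young_dual g w c : 0 < c ->
  2 * dotv g w <= c * mnorm2 (invmx M) g + c^-1 * mnorm2 M w.
Proof.
by move=> /(young (invmx M *m g) w); rewrite mulKVmx ?spd_unitmx // mnorm2_invmx.
Qed.

End PositiveDefinite.

Section StronglyConvexSmooth.
Variables (R : realType) (k : nat) (g : 'cV[R]_k -> R) (dg : 'cV[R]_k -> 'cV[R]_k).
Variables (M : 'M[R]_k) (mu L : R).
Hypothesis M_spd : spd M.
Hypothesis gS : in_S11 g dg M mu L.
Implicit Types (x y : 'cV[R]_k).

Lemma bregman_sym_sum x y :
  bregman g dg y x + bregman g dg x y = dotv (dg x - dg y) (x - y).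
Proof. by rewrite /bregman -(opprB x y) dotvNr dotvBl; ring. Qed.

Lemma in_S11_strong_mono x y : mu * mnorm2 M (x - y) <= dotv (dg x - dg y) (x - y).
Proof.
rewrite -bregman_sym_sum.
have /andP[lo_xy _] := gS x y; have /andP[lo_yx _] := gS y x.
by move: lo_yx; rewrite -(opprB x y) mnorm2N; lra.
Qed.

Lemma in_S11_le : (0 < k)%N -> mu <= L.
Proof.
move=> k_gt0; pose x : 'cV[R]_k := const_mx 1.
have x_neq0 : x != 0.
  apply/negP => /eqP/matrixP/(_ (Ordinal k_gt0) 0).
  by rewrite !mxE => /eqP; rewrite oner_eq0.
have /andP[lo up] := gS x 0.
by rewrite -(ler_pM2r (spd_gt0 M_spd x_neq0)); move: (le_trans lo up); rewrite subr0; lra.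
Qed.

Hypotheses (mu_ge0 : 0 <= mu) (L_gt0 : 0 < L).

(* Apply the lower S^{1,1} bound at [x] and the upper one at [y] to the
   gradient step [y - L^-1 M^-1 (dg y - dg x)]. *)
Lemma bregman_ge_grad_gap x y :
  mnorm2 (invmx M) (dg y - dg x) / (2 * L) <= bregman g dg y x.
Proof.
set r := dg y - dg x; set d := L^-1 *: (invmx M *m r).
have /andP[lo _] := gS x (y - d); have /andP[_ up] := gS y (y - d).
have lo_ge0 : 0 <= bregman g dg (y - d) x.
  by apply: le_trans lo; rewrite mulr_ge0 ?divr_ge0 ?spd_ge0.
move: up lo_ge0; rewrite (_ : y - (y - d) = d); last by rewrite opprB addrC subrK.
rewrite /bregman (_ : y - d - y = - d); last by rewrite addrAC subrr add0r.
rewrite (_ : y - d - x = (y - x) - d); last by rewrite addrAC.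
have dM : mnorm2 M d = L^-1 ^+ 2 * mnorm2 (invmx M) r.
  by rewrite mnorm2Z mnorm2_invmx.
have rd : dotv (dg y) d - dotv (dg x) d = L^-1 * mnorm2 (invmx M) r.
  by rewrite -dotvBl dotvZr /mnorm2 dotvC.
rewrite dM dotvNr !dotvBr => up lo_ge0.
have -> : mnorm2 (invmx M) r / (2 * L) =
          L^-1 * mnorm2 (invmx M) r - L / 2 * (L^-1 ^+ 2 * mnorm2 (invmx M) r).
  by field; rewrite gt_eqF.
lra.
Qed.

Lemma in_S11_cocoercive x y :
  mnorm2 (invmx M) (dg x - dg y) <= L * dotv (dg x - dg y) (x - y).
Proof.
have gap_xy := bregman_ge_grad_gap x y; have gap_yx := bregman_ge_grad_gap y x.
rewrite -(opprB (dg x)) mnorm2N in gap_xy.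
rewrite -bregman_sym_sum; set Q := mnorm2 _ _ in gap_xy gap_yx *.
have -> : Q = L * (Q / (2 * L) + Q / (2 * L)) by field; rewrite gt_eqF.
by rewrite ler_pM2l //; lra.
Qed.

Lemma in_S11_lipschitz x y :
  mnorm2 (invmx M) (dg x - dg y) <= L ^+ 2 * mnorm2 M (x - y).
Proof.
have coco := in_S11_cocoercive x y.
have Linv_gt0 : 0 < L^-1 by rewrite invr_gt0.
have := young_dual M_spd (dg x - dg y) (x - y) Linv_gt0; rewrite invrK.
set Q := mnorm2 _ _ in coco *; set w := x - y in coco *.
move=> /(ler_wpM2l (ltW L_gt0)).
have -> : L * (L^-1 * Q + L * mnorm2 M w) = Q + L ^+ 2 * mnorm2 M w.
  by field; rewrite gt_eqF.
lra.
Qed.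

End StronglyConvexSmooth.

Section RayleighQuotient.
Variables (R : realType) (k : nat).

Lemma mnorm2_trmx_continuous (M : 'M[R]_k) :
  continuous (fun r : 'rV[R]_k => mnorm2 M r^T).
Proof.
have -> : (fun r : 'rV[R]_k => mnorm2 M r^T) =
          (fun r => \sum_i (\sum_j M i j * r 0 j) * r 0 i).
  apply: funext => r; rewrite /mnorm2 dotvE; apply: eq_bigr => i _; rewrite !mxE.
  by congr (_ * _); apply: eq_bigr => j _; rewrite !mxE.
apply: continuous_big; first exact: add_continuous.
move=> i _ r; apply: continuousM; last exact: coord_continuous.
apply: continuous_big; first exact: add_continuous.
by move=> j _ s; apply: continuousM; [exact: cst_continuous | exact: coord_continuous].
Qed.

Lemma unit_sphere_compact : compact [set r : 'rV[R]_k | `|r| = 1].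
Proof.
apply: bounded_closed_compact.
  rewrite /= /bounded_near; near=> M0 => x /= ->.
  by near: M0; apply: nbhs_pinfty_ge; rewrite num_real.
rewrite (_ : [set r | `|r| = 1] = (fun r : 'rV[R]_k => `|r|) @^-1` [set 1]) //.
apply: preimage_closed; first by move=> x _; exact: norm_continuous.
exact: closed_eq.
Unshelve. all: by end_near.
Qed.

(* The quotient [mnorm2 K w / mnorm2 V w] is continuous on the compact unit
   sphere and scale invariant, so it attains its supremum. *)
Lemma rayleigh_max (K V : 'M[R]_k) : (0 < k)%N -> spd V ->
  exists2 w0 : 'cV[R]_k, w0 != 0 &
    forall w, mnorm2 K w * mnorm2 V w0 <= mnorm2 K w0 * mnorm2 V w.
Proof.
move=> k_gt0 V_spd; pose A := [set r : 'rV[R]_k | `|r| = 1].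
have trmx_neq0 (r : 'rV[R]_k) : (r^T != 0) = (r != 0).
  by rewrite -(inj_eq (@trmx_inj _ _ _)) trmxK trmx0.
have A_neq0 r : A r -> r != 0.
  by rewrite /A /= => r1; apply: contra_eqN r1 => /eqP ->; rewrite normr0 eq_sym oner_eq0.
have A0 : A !=set0.
  pose r0 : 'rV[R]_k := const_mx 1.
  have r0_neq0 : r0 != 0.
    apply/negP => /eqP/matrixP/(_ 0 (Ordinal k_gt0)).
    by rewrite !mxE => /eqP; rewrite oner_eq0.
  by exists (`|r0|^-1 *: r0); rewrite /A /= normfZV.
pose psi r := mnorm2 K r^T / mnorm2 V r^T.
have psi_cont : {within A, continuous psi}.
  apply: continuous_in_subspaceT => r; rewrite inE => /A_neq0 r_neq0.
  apply: (continuousM (s := fun r => mnorm2 K r^T) (t := fun r => (mnorm2 V r^T)^-1)).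
    exact: mnorm2_trmx_continuous.
  apply: continuousV; last exact: mnorm2_trmx_continuous.
  by rewrite gt_eqF // spd_gt0 // trmx_neq0.
have [c cA c_max] := EVT_max_rV A0 unit_sphere_compact psi_cont.
have c_neq0 := A_neq0 _ (set_mem cA).
exists c^T; first by rewrite trmx_neq0.
move=> w; have [->|w_neq0] := eqVneq w 0; first by rewrite !mnorm2_0 mul0r mulr0.
have wT_neq0 : w^T != 0 by rewrite -(inj_eq (@trmx_inj _ _ _)) trmxK trmx0.
have := c_max (`|w^T|^-1 *: w^T); rewrite inE /A /= normfZV // => /(_ erefl).
rewrite /psi linearZ /= !mnorm2Z -mulf_div divff ?mul1r; last first.
  by rewrite expf_neq0 // invr_eq0 normr_eq0.
rewrite trmxK ler_pdivrMr ?spd_gt0 // mulrAC ler_pdivlMr ?spd_gt0 ?trmx_neq0 //.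
Qed.

Lemma nsd_form_eq0 (S : 'M[R]_k) w0 : S^T = S ->
  (forall w, mnorm2 S w <= 0) -> mnorm2 S w0 = 0 -> S *m w0 = 0.
Proof.
move=> sS S_le0 Sw0; apply: dotvv_eq0.
set z := S *m w0; set a := dotv z z; set b := mnorm2 S z.
have b_le0 : b <= 0 := S_le0 z; have a_ge0 : 0 <= a := dotvv_ge0 z.
(* The form at [w0 + a / (1 - b) *: z] equals [a^2 (2 - b) / (1 - b)^2]. *)
have := S_le0 (w0 + (a / (1 - b)) *: z).
rewrite mnorm2D // Sw0 mnorm2Z dotvZr -/z -/a -/b add0r => ineq.
have : a ^+ 2 * (2 - b) <= 0.
  have -> : a ^+ 2 * (2 - b) =
            (2 * (a / (1 - b) * a) + (a / (1 - b)) ^+ 2 * b) * (1 - b) ^+ 2.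
    by field; rewrite gt_eqF //; lra.
  by rewrite pmulr_lle0 // exprn_gt0 //; lra.
rewrite pmulr_lle0; last by lra.
by move=> a2_le0; apply/eqP; rewrite -sqrf_eq0 eq_le a2_le0 sqr_ge0.
Qed.

End RayleighQuotient.

Section SchurComplementBound.
Variables (R : realType) (m n : nat) (B : 'M[R]_(n, m)) (IV : 'M[R]_m) (IQ : 'M[R]_n).
Hypotheses (IV_spd : spd IV) (IQ_spd : spd IQ).
Local Notation S := (invmx IQ *m B *m invmx IV *m B^T).
Local Notation K := (B^T *m invmx IQ *m B).

Lemma mnorm2_BtB w : mnorm2 K w = mnorm2 (invmx IQ) (B *m w).
Proof. by rewrite /mnorm2 -!mulmxA dotv_mulmx trmxK. Qed.

Lemma eigenvalue_ge0 a : eigenvalue S a -> 0 <= a.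
Proof.
move=> /eigenvalueP [v vS v_neq0].
have vT_neq0 : v^T != 0 by rewrite -(inj_eq (@trmx_inj _ _ _)) trmxK trmx0.
set x := B^T *m (invmx IQ *m v^T).
have : mnorm2 (invmx IV) x = a * mnorm2 (invmx IQ) v^T.
  rewrite /mnorm2 /dotv /x !trmx_mul !trmxK (spd_sym (spd_invmx IQ_spd)).
  rewrite (spd_sym (spd_invmx IV_spd)).
  have -> : v *m invmx IQ *m B *m invmx IV *m (B^T *m (invmx IQ *m v^T))
          = (v *m S) *m (invmx IQ *m v^T) by rewrite !mulmxA.
  by rewrite vS -scalemxAl mxE mulmxA.
have := spd_ge0 (spd_invmx IV_spd) x => /[swap] ->.
by rewrite pmulr_lge0 // spd_gt0 //; exact: spd_invmx.
Qed.

Lemma rayleigh_eigenvalue w0 l : w0 != 0 -> 0 < l ->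
  (forall w, mnorm2 K w <= l * mnorm2 IV w) -> mnorm2 K w0 = l * mnorm2 IV w0 ->
  eigenvalue S l.
Proof.
move=> w0_neq0 l_gt0 K_le Kw0.
have sK : K^T = K by rewrite !trmx_mul trmxK (spd_sym (spd_invmx IQ_spd)) mulmxA.
have sIV := spd_sym IV_spd.
have Kw0_eq : K *m w0 = l *: (IV *m w0).
  apply/eqP; rewrite -subr_eq0 scalemxAl -mulmxBl; apply/eqP.
  apply: nsd_form_eq0 => [|w|]; rewrite ?mnorm2_subM ?Kw0 ?subrr //.
    by rewrite linearB /= linearZ /= sK sIV.
  by rewrite subr_le0.
have Bw0_neq0 : B *m w0 != 0.
  apply/negP => /eqP Bw0; move: Kw0_eq; rewrite -mulmxA Bw0 mulmx0 => /esym/eqP.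
  rewrite scaler_eq0 gt_eqF //= => /eqP IVw0.
  by move: w0_neq0; rewrite -(mulKmx (spd_unitmx IV_spd) w0) IVw0 mulmx0 eqxx.
apply/eigenvalueP; exists (B *m w0)^T; last first.
  by rewrite -(inj_eq (@trmx_inj _ _ _)) trmxK trmx0.
have : (K *m w0)^T = l *: (w0^T *m IV) by rewrite Kw0_eq linearZ /= trmx_mul sIV.
rewrite trmx_mul sK => Kw0T.
rewrite trmx_mul !mulmxA.
have -> : w0^T *m B^T *m invmx IQ *m B = w0^T *m K by rewrite !mulmxA.
by rewrite Kw0T -!scalemxAl -(mulmxA _ IV) mulmxV ?spd_unitmx // mulmx1.
Qed.

(* A maximizer of the quotient [mnorm2 K w / mnorm2 IV w] yields a (left)
   eigenvector [(B w0)^T] of [S], so the maximum is at most [LS2]. *)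
Lemma mnorm2_B_le (LS2 : R) : (0 < m)%N ->
  eigenvalue S LS2 -> (forall a, eigenvalue S a -> a <= LS2) ->
  forall w, mnorm2 (invmx IQ) (B *m w) <= LS2 * mnorm2 IV w.
Proof.
move=> m_gt0 LS2_eig LS2_max w; rewrite -mnorm2_BtB.
have [w0 w0_neq0 w0_max] := rayleigh_max K m_gt0 IV_spd.
have IVw0_gt0 := spd_gt0 IV_spd w0_neq0.
set l := mnorm2 K w0 / mnorm2 IV w0.
have K_le w' : mnorm2 K w' <= l * mnorm2 IV w'.
  by rewrite /l mulrAC ler_pdivlMr.
apply: le_trans (K_le w) _; rewrite ler_wpM2r ?spd_ge0 //.
have [l_le0|l_gt0] := lerP l 0; first exact: le_trans l_le0 (eigenvalue_ge0 LS2_eig).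
apply/LS2_max/(rayleigh_eigenvalue w0_neq0 l_gt0 K_le).
by rewrite /l divfK ?gt_eqF.
Qed.

End SchurComplementBound.

Section DirectionalDerivative.
Variables (R : realType) (k : nat) (F : 'cV[R]_k -> R).

Lemma is_derive_right_cvg x v d : is_derive x v F d ->
  (fun t : R => t^-1 *: (F (t *: v + x) - F x)) @ 0^'+ --> d.
Proof.
move=> [dF <-] A /dF /nbhs_ballP [_ /posnumP[e] xe_A].
by exists e%:num => //= t xe_t; rewrite lt_def => /andP [t_neq0 _]; apply: xe_A.
Qed.

Lemma is_derive_ge x v d c : is_derive x v F d ->
  (forall t : R, 0 < t <= 1 -> t * c <= F (t *: v + x) - F x) -> c <= d.
Proof.
move=> /is_derive_right_cvg dF c_le; apply: (cvgr_to_ge dF).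
near=> t; rewrite /GRing.scale /= ler_pdivlMl; last by near: t; exact: nbhs_right_gt.
apply: c_le; apply/andP; split; first by near: t; exact: nbhs_right_gt.
by near: t; exact: nbhs_right_le.
Unshelve. all: by end_near.
Qed.

Lemma is_derive_le x v d c : is_derive x v F d ->
  (forall t : R, 0 < t <= 1 -> F (t *: v + x) - F x <= t * c) -> d <= c.
Proof.
move=> /is_derive_right_cvg dF le_c; apply: (cvgr_to_le dF).
near=> t; rewrite /GRing.scale /= ler_pdivrMl; last by near: t; exact: nbhs_right_gt.
apply: le_c; apply/andP; split; first by near: t; exact: nbhs_right_gt.
by near: t; exact: nbhs_right_le.
Unshelve. all: by end_near.
Qed.

End DirectionalDerivative.

Section ConvexGradient.
Variables (R : realType) (k : nat) (h : 'cV[R]_k -> R) (dh : 'cV[R]_k -> 'cV[R]_k).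
Hypotheses (h_grad : is_gradient h dh) (h_cvx : convex_fun h).

Lemma convex_gradient_le x y : dotv (dh x) (y - x) <= h y - h x.
Proof.
apply: (is_derive_le (h_grad x (y - x))) => t /andP[t_gt0 t_le1].
have := @h_cvx y x t; rewrite t_le1 ltW //= => /(_ isT).
have -> : t *: y + (1 - t) *: x = t *: (y - x) + x.
  by rewrite scalerBr scalerBl scale1r addrA addrAC.
lra.
Qed.

Lemma convex_gradient_mono x y : 0 <= dotv (dh x - dh y) (x - y).
Proof.
have := convex_gradient_le x y; have := convex_gradient_le y x.
rewrite -(opprB x y) dotvNr dotvBl; lra.
Qed.

End ConvexGradient.

Section SaddlePoint.
Variables (R : realType) (m n : nat) (B : 'M[R]_(n, m)).
Variables (f : 'cV[R]_m -> R) (df : 'cV[R]_m -> 'cV[R]_m).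
Variables (h : 'cV[R]_n -> R) (dh : 'cV[R]_n -> 'cV[R]_n).
Variables (us : 'cV[R]_m) (ps : 'cV[R]_n).
Hypothesis saddle : saddle_point f h B us ps.

Lemma saddle_grad_u : is_gradient f df -> df us + B^T *m ps = 0.
Proof.
move=> f_grad; apply: dotv_ge0_eq0 => v; rewrite dotvDl.
suff : - dotv (B^T *m ps) v <= dotv (df us) v by lra.
apply: (is_derive_ge (f_grad us v)) => t _.
have [_] := saddle (t *: v + us) ps.
rewrite /lagr mulmxDr -scalemxAr dotvDl dotvZl [dotv (B *m v) _]dotv_mulmx.
rewrite [dotv (B^T *m ps) v]dotvC; lra.
Qed.

Lemma saddle_grad_p : is_gradient h dh -> dh ps = B *m us.
Proof.
move=> h_grad; apply/eqP; rewrite -subr_eq0; apply/eqP.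
apply: dotv_ge0_eq0 => v; rewrite dotvBl.
suff : dotv (B *m us) v <= dotv (dh ps) v by lra.
apply: (is_derive_ge (h_grad ps v)) => t _.
have [+ _] := saddle us (t *: v + ps).
rewrite /lagr dotvDr dotvZr; lra.
Qed.

End SaddlePoint.

Section InexactImexStep.
Variables (R : realType) (m n : nat) (B : 'M[R]_(n, m)).
Variables (f : 'cV[R]_m -> R) (df : 'cV[R]_m -> 'cV[R]_m).
Variables (h : 'cV[R]_n -> R) (dh : 'cV[R]_n -> 'cV[R]_n).
Variables (IV : 'M[R]_m) (IQ : 'M[R]_n) (us : 'cV[R]_m) (ps : 'cV[R]_n).
Variables (muf Lf Le muhB LhB LS2 : R).
Hypotheses (IV_spd : spd IV) (IQ_spd : spd IQ).
Hypotheses (saddle_u : df us + B^T *m ps = 0) (saddle_p : dh ps = B *m us).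
Hypothesis f_S11 : in_S11 f df IV muf Lf.
Hypotheses (muf_gt0 : 0 < muf) (Lf_gt0 : 0 < Lf) (Lf_lt2 : Lf < 2).
Hypothesis e_lip : forall x y,
  mnorm2 IV (emap IV df x - emap IV df y) <= Le ^+ 2 * mnorm2 IV (x - y).
Hypothesis hB_S11 : in_S11 (hB h B IV) (dhB dh B IV) IQ muhB LhB.
Hypotheses (muhB_gt0 : 0 < muhB) (LhB_gt0 : 0 < LhB) (LS2_ge0 : 0 <= LS2).
Hypothesis B_le : forall w, mnorm2 (invmx IQ) (B *m w) <= LS2 * mnorm2 IV w.
Hypothesis dh_mono : forall x y, 0 <= dotv (dh x - dh y) (x - y).

Local Notation muQ := ((2 - Lf) * muhB).
Local Notation LSQ2 := (LhB ^+ 2 + Le ^+ 2 * LS2).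

Lemma LSQ2_gt0 : 0 < LSQ2.
Proof. by apply: ltr_wpDr; [rewrite mulr_ge0 ?sqr_ge0 | rewrite exprn_gt0]. Qed.

Lemma emapB x y :
  emap IV df x - emap IV df y = (x - y) - invmx IV *m (df x - df y).
Proof.
rewrite /emap mulmxBr; move: (invmx IV *m df x) (invmx IV *m df y) => a b.
by apply/matrixP => i j; rewrite !mxE; ring.
Qed.

(* Both Lipschitz bounds are combined with the weight [LhB^2 / (Le^2 LS2)]
   in Young's inequality. *)
Lemma mismatch_le pk p1 uk u1 :
  mnorm2 (invmx IQ)
    (B *m (emap IV df uk - emap IV df u1) - (dhB dh B IV pk - dhB dh B IV p1))
  <= LSQ2 * (mnorm2 IV (u1 - uk) + mnorm2 IQ (p1 - pk)).
Proof.
set Du := B *m _; set Dp := dhB _ _ _ pk - _.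
set U := mnorm2 IV (u1 - uk); set P := mnorm2 IQ (p1 - pk).
have IQi_spd := spd_invmx IQ_spd.
have U_ge0 : 0 <= U := spd_ge0 IV_spd _; have P_ge0 : 0 <= P := spd_ge0 IQ_spd _.
have Dp_le : mnorm2 (invmx IQ) Dp <= LhB ^+ 2 * P.
  by rewrite /P -mnorm2N opprB (in_S11_lipschitz IQ_spd hB_S11) // ltW.
have Du_le : mnorm2 (invmx IQ) Du <= Le ^+ 2 * LS2 * U.
  apply: le_trans (B_le _) _; rewrite (mulrC _ LS2) -mulrA.
  by apply: ler_wpM2l => //; rewrite /U -mnorm2N opprB.
set c1 := LhB ^+ 2 in Dp_le *; set c2 := Le ^+ 2 * LS2 in Du_le *.
have c1_gt0 : 0 < c1 by rewrite exprn_gt0.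
have [c20|c2_neq0] := eqVneq c2 0.
  have -> : Du = 0 by apply: (spd_le0 IQi_spd); rewrite c20 mul0r in Du_le.
  rewrite sub0r mnorm2N c20 addr0; apply: le_trans Dp_le _.
  by apply: ler_wpM2l; [exact: ltW | lra].
have c2_gt0 : 0 < c2 by rewrite lt_def c2_neq0 mulr_ge0 ?sqr_ge0.
set s := c1 / c2; have s_gt0 : 0 < s by rewrite divr_gt0.
have := young IQi_spd Du (- Dp) s_gt0; rewrite mnorm2N dotvNr => cross.
rewrite mnorm2B ?(spd_sym IQi_spd) //.
have Du_le' : (1 + s) * mnorm2 (invmx IQ) Du <= (c1 + c2) * U.
  have -> : c1 + c2 = (1 + s) * c2 by rewrite /s; field; rewrite gt_eqF.
  by rewrite -mulrA ler_pM2l //; lra.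
have Dp_le' : (1 + s^-1) * mnorm2 (invmx IQ) Dp <= (c1 + c2) * P.
  have -> : c1 + c2 = (1 + s^-1) * c1 by rewrite /s; field; rewrite !gt_eqF.
  by rewrite -mulrA ler_pM2l ?addr_gt0 ?invr_gt0.
lra.
Qed.

Section OneStep.
Variables (a eps : R) (uk u1 : 'cV[R]_m) (pk pk1 : 'cV[R]_n).
Hypothesis a_gt0 : 0 < a.
Hypothesis pk1_def : pk1 = p_next IV IQ B df dh a uk pk.

Local Notation res := (grad_ftilde IV B df a uk pk1 u1).
Local Notation gf := (df u1 - df us).
Local Notation ghB := (dhB dh B IV pk1 - dhB dh B IV ps).
Local Notation mismatch :=
  (B *m (emap IV df uk - emap IV df u1) - (dhB dh B IV pk - dhB dh B IV pk1)).
Local Notation ub := (u1 - us).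
Local Notation pb := (pk1 - ps).

Lemma u_error_eq :
  IV *m (u1 - uk) = a *: (res - gf - B^T *m pb).
Proof.
have Bps : df us = - (B^T *m ps) by apply/eqP; rewrite -addr_eq0 saddle_u.
rewrite /grad_ftilde Bps (mulmxBr B^T pk1 ps) (mulmxDr IV (u1 - uk)) -scalemxAr.
rewrite mulKVmx ?spd_unitmx //.
move: (IV *m (u1 - uk)) (B^T *m pk1) (B^T *m ps) (df u1) => x y z w.
by apply/matrixP => i j; rewrite !mxE; field; rewrite gt_eqF.
Qed.

Lemma p_error_eq :
  IQ *m (pk1 - pk) = a *: (mismatch - ghB + B *m (ub - invmx IV *m gf)).
Proof.
rewrite -emapB.
have -> : pk1 - pk = - (a *: (invmx IQ *m (dh pk - B *m u_half IV B df uk pk))).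
  by rewrite pk1_def /p_next addrAC subrr add0r.
rewrite mulmxN -scalemxAr mulKVmx ?spd_unitmx // /dhB /emap /u_half.
have Bps : df us = - (B^T *m ps) by apply/eqP; rewrite -addr_eq0 saddle_u.
rewrite Bps saddle_p !(mulmxDr, mulmxBr, mulmxN) !mulmxA.
move: (dh pk) (dh pk1) (B *m uk) (B *m us) (B *m u1) (B *m invmx IV *m df uk)
  (B *m invmx IV *m df u1) (B *m invmx IV *m B^T *m pk) (B *m invmx IV *m B^T *m pk1)
  (B *m invmx IV *m B^T *m ps) => x1 x2 x3 x4 x5 x6 x7 x8 x9 x10.
by apply/matrixP => i j; rewrite !mxE; ring.
Qed.

Lemma u_energy_eq :
  mnorm2 IV (uk - us) = mnorm2 IV ub + mnorm2 IV (u1 - uk)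
    - 2 * a * (dotv res ub - dotv gf ub - dotv (B^T *m pb) ub).
Proof.
by rewrite (mnorm2_three_point (spd_sym IV_spd) u1) u_error_eq dotvZl !dotvBl; ring.
Qed.

Lemma p_energy_eq :
  mnorm2 IQ (pk - ps) = mnorm2 IQ pb + mnorm2 IQ (pk1 - pk)
    - 2 * a * (dotv mismatch pb - dotv ghB pb + dotv (B^T *m pb) ub
               - dotv (invmx IV *m gf) (B^T *m pb)).
Proof.
rewrite (mnorm2_three_point (spd_sym IQ_spd) pk1) p_error_eq dotvZl.
rewrite [dotv (_ + B *m _) _]dotvDl [dotv (mismatch - _) _]dotvBl.
by rewrite [dotv (B *m _) pb]dotv_mulmx [dotv (ub - _) _]dotvBl [dotv ub _]dotvC; ring.
Qed.

Hypothesis res_le : mnorm2 (invmx IV) res <= eps.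

Lemma residual_term_le :
  2 * dotv res ub <= 2 / muf * eps + muf / 2 * mnorm2 IV ub.
Proof.
have c_gt0 : 0 < 2 / muf by rewrite divr_gt0.
apply: le_trans (young_dual IV_spd res ub c_gt0) _; rewrite invf_div lerD2r.
by apply: ler_wpM2l; [exact: ltW | exact: res_le].
Qed.

Lemma coupling_term_le :
  - 2 * dotv (invmx IV *m gf) (B^T *m pb)
  <= dotv gf ub + Lf * mnorm2 (invmx IV) (B^T *m pb).
Proof.
have c_gt0 : 0 < Lf^-1 by rewrite invr_gt0.
have := young (spd_invmx IV_spd) (- gf) (B^T *m pb) c_gt0.
rewrite invrK mnorm2N mulmxN dotvNl.
have : Lf^-1 * mnorm2 (invmx IV) gf <= dotv gf ub.
  by rewrite ler_pdivrMl // (in_S11_cocoercive IV_spd f_S11) // ltW.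
lra.
Qed.

Lemma coupling_le_ghB : mnorm2 (invmx IV) (B^T *m pb) <= dotv ghB pb.
Proof.
have -> : ghB = (dh pk1 - dh ps) + B *m invmx IV *m B^T *m pb.
  rewrite /dhB (mulmxBr _ pk1 ps).
  move: (dh pk1) (dh ps) (B *m invmx IV *m B^T *m pk1) (B *m invmx IV *m B^T *m ps).
  by move=> x1 x2 x3 x4; apply/matrixP => i j; rewrite !mxE; ring.
rewrite dotvDl -!mulmxA [dotv (B *m _) pb]dotv_mulmx.
by have := dh_mono pk1 ps; rewrite /mnorm2; lra.
Qed.

Lemma mismatch_term_le :
  2 * a * dotv mismatch pb
  <= mnorm2 IV (u1 - uk) + mnorm2 IQ (pk1 - pk) + a ^+ 2 * LSQ2 * mnorm2 IQ pb.
Proof.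
have aL_gt0 : 0 < (a * LSQ2)^-1 by rewrite invr_gt0 mulr_gt0 ?LSQ2_gt0.
have := young_dual IQ_spd mismatch pb aL_gt0.
rewrite invrK => /(ler_wpM2l (ltW a_gt0)).
have -> : a * ((a * LSQ2)^-1 * mnorm2 (invmx IQ) mismatch + a * LSQ2 * mnorm2 IQ pb)
  = LSQ2^-1 * mnorm2 (invmx IQ) mismatch + a ^+ 2 * LSQ2 * mnorm2 IQ pb.
  by field; rewrite !gt_eqF ?LSQ2_gt0.
have : LSQ2^-1 * mnorm2 (invmx IQ) mismatch <= mnorm2 IV (u1 - uk) + mnorm2 IQ (pk1 - pk).
  by rewrite ler_pdivrMl ?LSQ2_gt0 // mismatch_le.
lra.
Qed.

(* Strong monotonicity of [df] pays for [a * muf] of the [u]-error;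
   [2 - Lf] copies of [dotv ghB pb] survive the coupling term and pay for
   [a * muQ] of the [p]-error. *)
Lemma energy_descent :
  mnorm2 IV ub + mnorm2 IQ pb
    + a * (muf / 2) * mnorm2 IV ub + a * (muQ - a * LSQ2) * mnorm2 IQ pb
  <= mnorm2 IV (uk - us) + mnorm2 IQ (pk - ps) + 2 * a / muf * eps.
Proof.
rewrite u_energy_eq p_energy_eq.
have f_mono := in_S11_strong_mono f_S11 u1 us.
have hB_mono := in_S11_strong_mono hB_S11 pk1 ps.
have res_term := ler_wpM2l (ltW a_gt0) residual_term_le.
have coupling := ler_wpM2l (ltW a_gt0) coupling_term_le.
have dominated := coupling_le_ghB.
have mismatch_term := mismatch_term_le.
have a_f_mono := ler_wpM2l (ltW a_gt0) f_mono.
have a_hB_mono : a * (2 - Lf) * (muhB * mnorm2 IQ pb) <= a * (2 - Lf) * dotv ghB pb.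
  by apply: ler_wpM2l => //; rewrite mulr_ge0 ?subr_ge0 ?ltW.
have a_dominated : a * Lf * mnorm2 (invmx IV) (B^T *m pb) <= a * Lf * dotv ghB pb.
  by apply: ler_wpM2l => //; rewrite mulr_ge0 ?ltW.
have -> : 2 * a / muf * eps = a * (2 / muf * eps) by ring.
lra.
Qed.

Lemma imex_step : a * LSQ2 < muQ ->
  let muk := Num.min (muf / 2) (muQ - a * LSQ2) in
  energy IV IQ us ps u1 pk1 <=
    (1 + a * muk)^-1 * energy IV IQ us ps uk pk
    + 2 * a / ((1 + a * muk) * muf) * eps.
Proof.
move=> aL_lt /=; set muk := Num.min _ _.
have muk_le1 : muk <= muf / 2 by rewrite ge_min lexx.
have muk_le2 : muk <= muQ - a * LSQ2 by rewrite ge_min lexx orbT.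
have muk_gt0 : 0 < muk by rewrite lt_min divr_gt0 //= subr_gt0.
have c_gt0 : 0 < 1 + a * muk by rewrite addr_gt0 // mulr_gt0.
have eps_ge0 : 0 <= eps by apply: le_trans res_le; apply/spd_ge0/spd_invmx.
have extra_ge0 : 0 <= 2 * a / muf * eps.
  by rewrite mulr_ge0 // divr_ge0 ?mulr_ge0 // ltW.
have := energy_descent.
have := ler_wpM2l (ltW a_gt0) (ler_wpM2r (spd_ge0 IV_spd ub) muk_le1).
have := ler_wpM2l (ltW a_gt0) (ler_wpM2r (spd_ge0 IQ_spd pb) muk_le2).
rewrite !mulrA => descent_p descent_u descent.
rewrite (_ : 2 * a / _ * eps = (1 + a * muk)^-1 * (2 * a / muf * eps)); last first.
  by field; rewrite !gt_eqF.
rewrite -mulrDr ler_pdivlMl // /energy; lra.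
Qed.

End OneStep.

End InexactImexStep.

Lemma eigenvalue_dim_gt0 (F : fieldType) k (A : 'M[F]_k) a :
  eigenvalue A a -> (0 < k)%N.
Proof. by case/eigenvalueP; case: k A => // A v _; rewrite thinmx0 eqxx. Qed.

Lemma unroll_contraction (R : realFieldType) (e eps : nat -> R) (rho C : R) :
  0 <= rho -> (forall k, e k.+1 <= rho * e k + C * (rho * eps k)) ->
  forall N, e N.+1 <= rho ^+ N.+1 * e 0%N
                      + C * \sum_(0 <= k < N.+1) rho ^+ (N - k).+1 * eps k.
Proof.
move=> rho_ge0 e_step; elim=> [|N IH]; first by rewrite big_nat1 subnn.
apply: le_trans (e_step N.+1) _.
rewrite big_nat_recr //= subnn expr1.
have -> : \sum_(0 <= k < N.+1) rho ^+ (N.+1 - k).+1 * eps k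
        = rho * \sum_(0 <= k < N.+1) rho ^+ (N - k).+1 * eps k.
  by rewrite mulr_sumr; apply: eq_big_nat => k /andP[_ k_le]; rewrite subSn // exprS mulrA.
by have := ler_wpM2l rho_ge0 IH; rewrite [rho ^+ N.+2]exprS; lra.
Qed.

Lemma constant_step_rate (R : realFieldType) (muV muQ LSQ2 : R) :
  0 < muV -> 0 < muQ -> 0 < LSQ2 ->
  let a := muQ / (2 * LSQ2) in
  let rho := (1 + muQ * Num.min muV muQ / (4 * LSQ2))^-1 in
  let muk := Num.min (muV / 2) (muQ - a * LSQ2) in
  [/\ 0 < a, a * LSQ2 < muQ, (1 + a * muk)^-1 = rho,
      2 * a / ((1 + a * muk) * muV) = muQ / (muV * LSQ2) * rho & 0 < rho < 1].
Proof.
move=> muV_gt0 muQ_gt0 L_gt0 a rho muk.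
have a_gt0 : 0 < a by rewrite divr_gt0 // mulr_gt0.
have aL : a * LSQ2 = muQ / 2 by rewrite /a; field; rewrite gt_eqF.
have muk_eq : muk = Num.min muV muQ / 2.
  by rewrite /muk aL minr_pMl ?invr_ge0 ?ler0n //; congr Num.min; field.
have mu_gt0 : 0 < Num.min muV muQ by rewrite lt_min muV_gt0.
have c_gt0 : 0 < muQ * Num.min muV muQ / (4 * LSQ2).
  by rewrite divr_gt0 ?mulr_gt0.
have rate : (1 + a * muk)^-1 = rho.
  by rewrite /rho muk_eq /a; congr (1 + _)^-1; field; rewrite gt_eqF.
split=> //; first by rewrite aL; lra.
- have muk_gt0 : 0 < muk by rewrite muk_eq divr_gt0.
  have : 0 < muQ * muk by exact: mulr_gt0.
  by rewrite -rate /a => ?; field; rewrite !gt_eqF //; lra.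
- by apply/andP; split; rewrite /rho ?invr_gt0 ?invf_lt1; lra.
Qed.

Theorem theorem4p4 (R : realType) (m n : nat) (B : 'M[R]_(n, m))
  (f : 'cV[R]_m -> R) (df : 'cV[R]_m -> 'cV[R]_m)
  (h : 'cV[R]_n -> R) (dh : 'cV[R]_n -> 'cV[R]_n)
  (IV : 'M[R]_m) (IQ : 'M[R]_n) (us : 'cV[R]_m) (ps : 'cV[R]_n)
  (muf Lf Le muhB LhB LS2 : R)
  (u : nat -> 'cV[R]_m) (p : nat -> 'cV[R]_n) (alpha eps : nat -> R) :
  (n <= m)%N -> \rank B = n ->
  is_gradient f df -> is_gradient h dh ->
  convex_fun f -> convex_fun h ->
  lipschitz_map df -> lipschitz_map dh ->
  saddle_point f h B us ps ->
  spd IV -> spd IQ ->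
  in_S11 f df IV muf Lf -> 0 < muf -> muf <= Lf -> Lf < 2 ->
  (* L_{e,I_V} : Lipschitz constant of e in ||.||_{I_V} *)
  0 <= Le ->
  (forall x y : 'cV[R]_m,
     mnorm2 IV (emap IV df x - emap IV df y) <= Le ^+ 2 * mnorm2 IV (x - y)) ->
  (* convexity / smoothness constants of h_B w.r.t. I_Q *)
  0 < muhB ->
  in_S11 (hB h B IV) (dhB dh B IV) IQ muhB LhB ->
  (* L_S^2 = lambda_max (I_Q^{-1} B I_V^{-1} B^T) *)
  eigenvalue (invmx IQ *m B *m invmx IV *m B^T) LS2 ->
  (forall a, eigenvalue (invmx IQ *m B *m invmx IV *m B^T) a -> a <= LS2) ->
  (* the inexact IMEX iteration *)
  (forall k, p k.+1 = p_next IV IQ B df dh (alpha k) (u k) (p k)) ->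
  (forall k, mnorm2 (invmx IV) (grad_ftilde IV B df (alpha k) (u k) (p k.+1) (u k.+1))
               <= eps k) ->
  let muV := muf in
  let muQ := (2 - Lf) * muhB in
  let LSQ2 := LhB ^+ 2 + Le ^+ 2 * LS2 in
  let E := energy IV IQ us ps in
  (forall k, 0 < alpha k < muQ / LSQ2 ->
     let muk := Num.min (muV / 2) (muQ - alpha k * LSQ2) in
     E (u k.+1) (p k.+1) <=
       (1 + alpha k * muk)^-1 * E (u k) (p k)
       + 2 * alpha k / ((1 + alpha k * muk) * muV) * eps k)
  /\
  ((forall k, alpha k = muQ / (2 * LSQ2)) ->
     let mu := Num.min muV muQ in
     let rho := (1 + muQ * mu / (4 * LSQ2))^-1 in
     0 < rho < 1 /\
     forall N : nat,
       E (u N.+1) (p N.+1) <=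
         rho ^+ N.+1 * E (u 0%N) (p 0%N)
         + muQ / (muV * LSQ2) * \sum_(0 <= k < N.+1) rho ^+ (N - k).+1 * eps k).
Proof.
move=> n_le_m _ f_grad h_grad _ h_cvx _ _ saddle IV_spd IQ_spd f_S11 muf_gt0 muf_le_Lf
  Lf_lt2 _ e_lip muhB_gt0 hB_S11 LS2_eig LS2_max p_step res_le muV muQ LSQ2 E.
have n_gt0 := eigenvalue_dim_gt0 LS2_eig.
have LhB_gt0 := lt_le_trans muhB_gt0 (in_S11_le IQ_spd hB_S11 n_gt0).
have LS2_ge0 := eigenvalue_ge0 IV_spd IQ_spd LS2_eig.
have L_gt0 : 0 < LSQ2 := LSQ2_gt0 Le LhB_gt0 LS2_ge0.
have B_le := mnorm2_B_le IV_spd IQ_spd (leq_trans n_gt0 n_le_m) LS2_eig LS2_max.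
have step k (a_gt0 : 0 < alpha k) :=
  imex_step IV_spd IQ_spd (saddle_grad_u saddle f_grad) (saddle_grad_p saddle h_grad)
    f_S11 muf_gt0 (lt_le_trans muf_gt0 muf_le_Lf) Lf_lt2 e_lip hB_S11 muhB_gt0
    LhB_gt0 LS2_ge0 B_le (convex_gradient_mono h_grad h_cvx)
    a_gt0 (p_step k) (res_le k).
split=> [k /andP[a_gt0]|alpha_const mu rho].
  by rewrite ltr_pdivlMr // => aL_lt; exact: step k a_gt0 aL_lt.
have muQ_gt0 : 0 < muQ by rewrite mulr_gt0 // subr_gt0.
have [a_gt0 aL_lt rate gain rho_bounds] := constant_step_rate muf_gt0 muQ_gt0 L_gt0.
split=> //; apply: (unroll_contraction (e := fun k => E (u k) (p k))).
  exact/ltW/(andP rho_bounds).1.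
move=> k; rewrite mulrA -gain -[rho]rate; have := step k.
by rewrite alpha_const; apply.
Qed.
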